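(* Let $k\geq 4$ and $j\geq k+2$ be integers. Then $$j+\Big\lfloor\frac{j-1}{k+1}\Big\rfloor\leq R_k^{\mathcal{CA}}(k+3,j)\leq j-1+\Big\lceil\frac{j-1}{k}\Big\rceil,$$ where $\mathcal{CA}$ is the class of cacti.
   Context: All graphs are finite and simple. For a graph $G$ and a nonnegative integer $k$, a $k$-sparse $j$-set is a set of $j$ vertices of $G$ inducing a subgraph of maximum degree at most $k$; a $k$-dense $i$-set is a set of $i$ vertices of $G$ that is $k$-sparse in the complement of $G$. For a graph class $\mathcal{G}$, $R_k^{\mathcal{G}}(i,j)$ is the smallest natural number $n$ such that every graph on $n$ vertices in $\mathcal{G}$ has either a $k$-dense $i$-set or a $k$-sparse $j$-set. A cactus is a graph (not necessarily connected) in which every block is a cycle, a single edge, or a single vertex. *)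

From mathcomp Require Import all_boot.
From Stdlib Require Import ClassicalEpsilon.
Set Implicit Arguments. Unset Strict Implicit. Unset Printing Implicit Defensive.

Definition simple_graph (T : finType) (e : rel T) : Prop :=
  symmetric e /\ irreflexive e.

Definition deg_in (T : finType) (e : rel T) (S : {set T}) (x : T) : nat :=
  #|[set y in S | e x y]|.

Definition sparse_set (T : finType) (e : rel T) (k j : nat) (S : {set T}) : Prop :=
  #|S| = j /\ forall x, x \in S -> deg_in e S x <= k.

Definition compl_graph (T : finType) (e : rel T) : rel T :=
  fun x y => (x != y) && ~~ e x y.

Definition dense_set (T : finType) (e : rel T) (k i : nat) (S : {set T}) : Prop :=
  sparse_set (compl_graph e) k i S.

Definition induced_rel (T : finType) (e : rel T) (B : {set T}) : rel T :=
  fun x y => [&& x \in B, y \in B & e x y].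

(* G[B] is connected (the empty graph counts as connected). *)
Definition connected_in (T : finType) (e : rel T) (B : {set T}) : Prop :=
  forall x y, x \in B -> y \in B -> connect (induced_rel e B) x y.

Definition nonseparable_in (T : finType) (e : rel T) (B : {set T}) : Prop :=
  B != set0 /\ connected_in e B /\
  forall v, v \in B -> connected_in e (B :\ v).

(* B is (the vertex set of) a block: a maximal connected subgraph without a
   cut vertex (blocks are induced subgraphs). *)
Definition is_block (T : finType) (e : rel T) (B : {set T}) : Prop :=
  nonseparable_in e B /\
  forall B' : {set T}, B \subset B' -> nonseparable_in e B' -> B' = B.

Definition is_cycle_in (T : finType) (e : rel T) (B : {set T}) : Prop :=
  3 <= #|B| /\ connected_in e B /\ forall x, x \in B -> deg_in e B x = 2.

Definition is_edge_in (T : finType) (e : rel T) (B : {set T}) : Prop :=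
  exists x y, x != y /\ e x y /\ B = [set x; y].

Definition is_vertex_in (T : finType) (B : {set T}) : Prop :=
  exists x, B = [set x].

Definition cactus (T : finType) (e : rel T) : Prop :=
  forall B : {set T}, is_block e B -> [\/ is_cycle_in e B, is_edge_in e B | is_vertex_in B].

Definition graph_class := forall n : nat, rel 'I_n -> Prop.

Definition cacti : graph_class := fun n e => cactus e.

Definition ramsey_prop (cls : graph_class) (k i j n : nat) : Prop :=
  forall e : rel 'I_n, simple_graph e -> cls n e ->
    (exists S, dense_set e k i S) \/ (exists S, sparse_set e k j S).

(* R_k^G(i,j): the smallest n with ramsey_prop (arbitrary if none exists). *)
Definition ramsey_num (cls : graph_class) (k i j : nat) : nat :=
  epsilon (inhabits 0%N)
    (fun n => ramsey_prop cls k i j n /\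
              forall m, ramsey_prop cls k i j m -> n <= m).

(* Upper bound: for k >= 2, every vertex set S of a cactus contains a set D
   with (k+1)|D| <= |S| - 1 whose deletion leaves maximum degree at most k; on
   j - 1 + ceil((j-1)/k) vertices what remains has at least j vertices.  D is
   built one vertex at a time.  Root the component of a neighbour of a vertex
   of degree > k and take a lowest vertex t having such a vertex below it.  A
   vertex of a cactus has at most two neighbours that are not below it (three
   would lie on two cycles through it sharing an edge), so near t one finds a
   set X of at least k+1 vertices and z in X such that deleting z makes X and
   its neighbourhood sparse; then recurse on S minus X.
   Lower bound: n - (j-1) disjoint stars K_{1,k+1} plus isolated vertices.
   Every nonempty vertex set contains a vertex of degree at most 1, whereas
   all degrees in a k-dense (k+3)-set are at least 2; and a k-sparse set
   misses a vertex of every star, so it has at most j - 1 vertices. *)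

From mathcomp Require Import all_boot.
From mathcomp Require Import zify.
From Stdlib Require Import ClassicalEpsilon.
Set Implicit Arguments. Unset Strict Implicit. Unset Printing Implicit Defensive.

Section InducedSubgraphs.
Variables (T : finType) (e : rel T).
Implicit Types (A B S : {set T}) (x y u v w r : T).

Lemma induced_rel_sym A : symmetric e -> symmetric (induced_rel e A).
Proof. by move=> es x y; rewrite /induced_rel es andbCA. Qed.

Lemma connect_induced_sym A : symmetric e -> connect_sym (induced_rel e A).
Proof. by move=> es; apply/sym_connect_sym/induced_rel_sym. Qed.

Lemma induced_relS A B : A \subset B -> subrel (induced_rel e A) (induced_rel e B).
Proof.
move=> /subsetP sAB x y /and3P[xA yA exy].
by rewrite /induced_rel (sAB x xA) (sAB y yA) exy.
Qed.

Lemma induced_rel_sub A : subrel (induced_rel e A) e.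
Proof. by move=> x y /and3P[]. Qed.

Lemma connect_inducedS A B x y : A \subset B ->
  connect (induced_rel e A) x y -> connect (induced_rel e B) x y.
Proof. by move=> sAB; apply: connect_sub => u w /(induced_relS sAB)/connect1. Qed.

Lemma connect_induced1 A x y :
  x \in A -> y \in A -> e x y -> connect (induced_rel e A) x y.
Proof. by move=> xA yA exy; apply: connect1; rewrite /induced_rel xA yA. Qed.

Lemma path_inducedE A x p : x \in A ->
  path (induced_rel e A) x p = path e x p && all (mem A) p.
Proof.
elim: p x => [|y p IHp] x xA //=.
rewrite /induced_rel xA /=; case yA: (y \in A); last by rewrite /= !andbF.
by rewrite IHp // andbA.
Qed.

Lemma path_induced_all A x p : path (induced_rel e A) x p -> all (mem A) p.
Proof.
by elim: p x => [|y p IHp] x //= /andP[/and3P[_ yA _] /IHp]; rewrite yA.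
Qed.

Lemma path_induced_connected A x p : symmetric e ->
  path e x p -> x \in A -> all (mem A) p ->
  {in x :: p &, forall y z, connect (induced_rel e A) y z}.
Proof.
move=> es ep xA pA y z yp zp.
have xpA : path (induced_rel e A) x p by rewrite path_inducedE ?ep.
apply: connect_trans (path_connect xpA zp).
by rewrite connect_induced_sym // (path_connect xpA yp).
Qed.

Lemma connect_induced_step A x y : connect (induced_rel e A) x y -> x != y ->
  exists z, [/\ x \in A, z \in A, e x z & connect (induced_rel e A) z y].
Proof.
move=> /connectP[[|z p] /= xp ->]; first by rewrite eqxx.
by case/andP: xp => /and3P[xA zA exz] zp _; exists z; split=> //; apply/connectP; exists p.
Qed.

Lemma connect_induced_setD1 A u r : u != r -> ~~ connect (induced_rel e (A :\ r)) u r.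
Proof.
move=> ur; apply/negP => /connectP[p up rE].
have: r \in u :: p by rewrite rE mem_last.
rewrite inE eq_sym (negbTE ur) => /(allP (path_induced_all up)).
by rewrite !inE eqxx.
Qed.

(* A shortest w-r path passes through v, and its tail from v avoids w. *)
Lemma connect_separator_swap A w v r : v != w ->
  connect (induced_rel e A) w r -> ~~ connect (induced_rel e (A :\ v)) w r ->
  connect (induced_rel e (A :\ w)) v r.
Proof.
move=> vw /connectP[p0 wp0 ->] wvr.
case: (shortenP wp0) wvr => p wp wpU _ wvr.
have wA : w \in A.
  by case: p wp {wpU} wvr => [|y p] /=; [rewrite connect0 | case/andP => /and3P[]].
have pA := path_induced_all wp.
case vp: (v \in p); last first.
  case/negP: wvr; apply/connectP; exists p => //.
  rewrite path_inducedE ?inE ?wA ?(eq_sym w v) ?vw // (sub_path (@induced_rel_sub _) wp).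
  apply/allP => y yp; have yA : y \in A := allP pA y yp.
  by rewrite !inE yA andbT; apply: contraFneq vp => <-.
case/splitPr: vp wp wpU pA => p1 p2 wp wpU pA.
rewrite last_cat /=; apply/connectP; exists p2 => //.
have vA : v \in A by apply: (allP pA); rewrite mem_cat inE eqxx orbT.
rewrite path_inducedE ?inE ?vw ?vA //.
rewrite cat_path /= in wp; case/and3P: wp => _ _ vp2.
rewrite (sub_path (@induced_rel_sub _) vp2) /=.
apply/allP => y yp2; rewrite !inE.
have -> : y \in A by apply: (allP pA y); rewrite mem_cat inE yp2 !orbT.
move: wpU; rewrite /= mem_cat inE negb_or => /andP[/andP[_ /norP[_ wp2]] _].
by rewrite andbT; apply: contraNneq wp2 => <-.
Qed.

Lemma separator_mem_path A u p a :
  path (induced_rel e A) u p -> a != u ->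
  ~~ connect (induced_rel e (A :\ a)) u (last u p) -> a \in p.
Proof.
move=> up au uar; apply/negPn/negP => ap; case/negP: uar.
case: p up ap => [|y p] up ap; first by rewrite connect0.
have uA : u \in A by case/andP: up => /and3P[].
apply/connectP; exists (y :: p) => //.
rewrite path_inducedE ?inE ?uA ?(eq_sym u) ?au // (sub_path (@induced_rel_sub _) up).
apply/allP => z zp; have zA : z \in A := allP (path_induced_all up) z zp.
by rewrite !inE zA andbT; apply: contraNneq ap => <-.
Qed.

Lemma deg_inS A B x : A \subset B -> deg_in e A x <= deg_in e B x.
Proof.
move=> /subsetP sAB; apply/subset_leq_card/subsetP => y.
by rewrite !inE => /andP[/sAB -> ->].
Qed.

Lemma deg_in_le_card A x : deg_in e A x <= #|A|.
Proof. by apply/subset_leq_card/subsetP => y; rewrite inE => /andP[]. Qed.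

Lemma deg_in_setD1 A x a :
  a \in A -> e x a -> deg_in e A x = (deg_in e (A :\ a) x).+1.
Proof.
move=> aA exa; rewrite /deg_in (cardsD1 a) inE aA exa /=.
by congr _.+1; apply: eq_card => y; rewrite !inE andbA.
Qed.

Lemma deg_in_setD1_le A x z : deg_in e (A :\ z) x <= deg_in e A x.
Proof. exact/deg_inS/subD1set. Qed.

Lemma deg_in_ltn_card A x : irreflexive e -> x \in A -> deg_in e A x < #|A|.
Proof.
move=> ei xA; apply/proper_card/properP; split; first by apply/subsetP => y /setIdP[].
by exists x; rewrite // inE ei andbF.
Qed.

Lemma card_le_deg_add_compl S x :
  #|S| <= (deg_in e S x + deg_in (compl_graph e) S x).+1.
Proof.
have sub : S \subset x |: ([set y in S | e x y] :|: [set y in S | compl_graph e x y]).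
  apply/subsetP => y yS; rewrite !inE yS /compl_graph /=.
  by case: (eqVneq y x) => [->|yx]; rewrite ?eqxx //; case: (e x y).
apply: leq_trans (subset_leq_card sub) _.
by rewrite cardsU1 -add1n; apply: leq_add (leq_b1 _) (leq_card_setU _ _).
Qed.

End InducedSubgraphs.

Section Cacti.
Variables (T : finType) (e : rel T).
Hypotheses (es : symmetric e) (ei : irreflexive e).
Implicit Types (A B S : {set T}) (x y u v w r : T).

Lemma nonseparable_cycle (s : seq T) :
  uniq s -> cycle e s -> s != [::] -> nonseparable_in e [set x in s].
Proof.
move=> s_uniq s_cycle s_nil; split; last split.
- by case: s s_nil {s_uniq s_cycle} => [|h t] // _; apply/set0Pn; exists h; rewrite !inE eqxx.
- case: s s_nil s_uniq s_cycle => [|h t] // _ _; rewrite /= rcons_path => /andP[ht _].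
  move=> x y; rewrite !in_set; apply: (path_induced_connected es ht); first by rewrite !inE eqxx.
  by apply/allP => u ut; rewrite /= !inE ut orbT.
move=> v; rewrite inE => vs.
have := rot_index vs; set rest := (drop _ _ ++ _) => s_rot.
have v_rest : uniq (v :: rest) by rewrite -s_rot rot_uniq.
have memr y : (y \in [set x in s] :\ v) = (y \in rest).
  rewrite !inE -(mem_rot (index v s) s) s_rot inE.
  by case: (eqVneq y v) => [->|] //=; case/andP: v_rest => /negbTE ->.
have : cycle e (v :: rest) by rewrite -s_rot rot_cycle.
move=> + x y; rewrite !memr.
case: rest {s_rot} v_rest memr => [|z rest] //= _ memr.
rewrite rcons_path => /andP[_ /andP[zrest _]].
apply: (path_induced_connected es zrest); first by rewrite memr inE eqxx.
by apply/allP => u ur; rewrite /= memr inE ur orbT.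
Qed.

Lemma nonseparable_connect_setD1 A v x y : nonseparable_in e A ->
  x \in A :\ v -> y \in A :\ v -> connect (induced_rel e (A :\ v)) x y.
Proof.
case=> _ [A_conn A_sep] xAv yAv; case vA: (v \in A); first exact: A_sep.
have sAAv : A \subset A :\ v.
  by apply/subsetP => u uA; rewrite !inE uA andbT; apply: contraFneq vA => <-.
by apply: connect_inducedS sAAv (A_conn x y _ _); [case/setD1P: xAv | case/setD1P: yAv].
Qed.

(* Removing any vertex leaves a common vertex of A and B, through which both
   parts stay connected. *)
Lemma nonseparableU A B a b : nonseparable_in e A -> nonseparable_in e B ->
  a \in A :&: B -> b \in A :&: B -> a != b -> nonseparable_in e (A :|: B).
Proof.
move=> nA nB /setIP[aA aB] /setIP[bA bB] ab.
have csym := connect_induced_sym _ es.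
have connect_via c (C : {set T}) : (forall x, x \in C -> connect (induced_rel e C) x c) ->
    connected_in e C.
  by move=> to_c x y xC yC; apply: connect_trans (to_c x xC) _; rewrite csym to_c.
split; first by apply/set0Pn; exists a; rewrite inE aA.
split.
  apply: (connect_via a) => x /setUP[xA|xB].
    exact: connect_inducedS (subsetUl A B) (nA.2.1 x a xA aA).
  exact: connect_inducedS (subsetUr A B) (nB.2.1 x a xB aB).
move=> v _.
have [c [cA cB cv]] : exists c, [/\ c \in A, c \in B & c != v].
  by case: (eqVneq a v) => [av|]; [exists b; rewrite // -av eq_sym | exists a].
apply: (connect_via c) => x /setD1P[xv /setUP[xA|xB]].
  by apply: connect_inducedS (setSD _ (subsetUl A B)) (nonseparable_connect_setD1 nA _ _);
    rewrite !inE ?xv ?xA ?cv ?cA.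
by apply: connect_inducedS (setSD _ (subsetUr A B)) (nonseparable_connect_setD1 nB _ _);
  rewrite !inE ?xv ?xB ?cv ?cB.
Qed.

Lemma nonseparable_block A : nonseparable_in e A ->
  exists2 B : {set T}, A \subset B & is_block e B.
Proof.
pose P : pred {set T} := fun B => excluded_middle_informative (nonseparable_in e B).
have PP (B : {set T}) : P B <-> nonseparable_in e B.
  by rewrite /P; case: excluded_middle_informative.
move=> /PP PA; case: (maxset_exists PA) => B /maxsetP[/PP nB maxB] sAB.
by exists B => //; split=> // B' sBB' /PP nB'; apply: maxB.
Qed.

Lemma nonseparable_deg_ge2 B x :
  nonseparable_in e B -> 2 < #|B| -> x \in B -> 1 < deg_in e B x.
Proof.
move=> [_ [B_conn B_sep]] B3 xB.
have other z : exists2 w, w \in B :\ z & x != w.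
  have /set0Pn[w] : B :\ x :\ z != set0.
    rewrite -card_gt0; have := cardsD1 x B; have := cardsD1 z (B :\ x).
    by rewrite xB; clear -B3; lia.
  by rewrite !inE => /and3P[wz wx wB]; exists w; rewrite 1?eq_sym ?inE ?wz.
have [w /setD1P[_ wB] xw] := other x.
have [z1 [_ z1B exz1 _]] := connect_induced_step (B_conn x w xB wB) xw.
have z1x : z1 != x by apply: contraTneq exz1 => ->; rewrite ei.
have [w' wB' xw'] := other z1.
have xB' : x \in B :\ z1 by rewrite !inE eq_sym z1x.
have [z2 [_ /setD1P[z2z1 z2B] exz2 _]] := connect_induced_step (B_sep z1 z1B x w' xB' wB') xw'.
by apply/card_gt1P; exists z2, z1; rewrite !inE z2B z1B exz1 exz2.
Qed.

Hypothesis cac : cactus e.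

Lemma cactus_nonseparable_deg A x :
  nonseparable_in e A -> x \in A -> deg_in e A x <= 2.
Proof.
case/nonseparable_block=> B sAB bB xA; apply: leq_trans (deg_inS e x sAB) _.
case: (cac bB) => [[_ [_ deg2]] | [a [b [_ [_ ->]]]] | [a ->]].
- by rewrite deg2 // (subsetP sAB).
- by apply: leq_trans (deg_in_le_card _ _ _) _; rewrite cards2; case: (a != b).
- by apply: leq_trans (deg_in_le_card _ _ _) _; rewrite cards1.
Qed.

Lemma nonseparable_through_linked_nbrs S x u w :
  e x u -> e w x -> connect (induced_rel e (S :\ x)) u w ->
  exists C, [/\ nonseparable_in e C, x \in C, u \in C & w \in C].
Proof.
move=> exu ewx /connectP[p0 up0 wE]; subst w.
case: (shortenP up0) ewx => p up p_uniq _ ewx.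
have pSx := path_induced_all up.
exists [set y in x :: u :: p]; split; rewrite ?inE ?eqxx ?orbT //; last first.
  by rewrite -in_cons mem_last orbT.
apply: nonseparable_cycle => //.
  rewrite cons_uniq p_uniq andbT in_cons negb_or; apply/andP; split.
    by apply: contraTneq exu => ->; rewrite ei.
  by apply/negP => /(allP pSx); rewrite !inE eqxx.
by rewrite /= rcons_path exu (sub_path (@induced_rel_sub _ _ _) up) ewx.
Qed.

(* Otherwise x would have degree 3 in the union of two cycles through it. *)
Lemma cactus_linked_nbrs S x u1 u2 u3 :
  e x u1 -> e x u2 -> e x u3 -> [/\ u1 != u2, u2 != u3 & u3 != u1] ->
  connect (induced_rel e (S :\ x)) u1 u2 -> ~ connect (induced_rel e (S :\ x)) u2 u3.
Proof.
move=> e1 e2 e3 u_neq c12 c23.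
have [C1 [nC1 xC1 u1C1 u2C1]] := nonseparable_through_linked_nbrs e1 (etrans (es _ _) e2) c12.
have [C2 [nC2 xC2 u2C2 u3C2]] := nonseparable_through_linked_nbrs e2 (etrans (es _ _) e3) c23.
have xu2 : x != u2 by apply: contraTneq e2 => ->; rewrite ei.
have xC : x \in C1 :&: C2 by rewrite inE xC1.
have u2C : u2 \in C1 :&: C2 by rewrite inE u2C1.
have xU : x \in C1 :|: C2 by rewrite inE xC1.
have := cactus_nonseparable_deg (nonseparableU nC1 nC2 xC u2C xu2) xU.
rewrite leqNgt => /negP; apply; apply/card_gt2P; exists u1, u2, u3; split=> //.
by split; rewrite !inE ?u1C1 ?u2C1 ?u3C2 ?orbT /= ?e1 ?e2 ?e3.
Qed.

End Cacti.

Section Separators.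
Variables (T : finType) (e : rel T) (S : {set T}) (r : T).
Hypothesis es : symmetric e.
Implicit Types (x y u v w : T).

Local Notation connS := (connect (induced_rel e S)).
Local Notation connSD x := (connect (induced_rel e (S :\ x))).

(* With r as the root, [below x] is the set of descendants of the cut vertex x
   in the block-cutvertex tree of the component of r. *)
Definition below x : {set T} :=
  [set u in S | [&& u != x, connS u r & ~~ connSD x u r]].

Definition above v : {set T} := [set y in S | e v y & y \notin below v].

Lemma belowP x u :
  reflect [/\ u \in S, u != x, connS u r & ~~ connSD x u r] (u \in below x).
Proof. by rewrite inE; apply: (iffP and4P). Qed.

Lemma below_sub x : below x \subset S.
Proof. by apply/subsetP => u /belowP[]. Qed.

Lemma below_notin x : x \notin below x.
Proof. by apply/negP => /belowP[_ /eqP]. Qed.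

Lemma below_nbr x w y :
  w \in below x -> y \in S -> e w y -> y != x -> y \in below x.
Proof.
move=> /belowP[wS wx wr wxr] yS ewy yx; apply/belowP; split=> //.
  by apply: connect_trans wr; apply: connect_induced1; rewrite // es.
apply: contra wxr; apply: connect_trans.
by apply: connect_induced1; rewrite ?inE ?wx ?yx.
Qed.

Lemma below_asym a b : a \in below b -> b \notin below a.
Proof.
move=> /belowP[_ ab ar abr]; apply/negP => /belowP[_ _ _].
by rewrite (connect_separator_swap _ ar abr) // eq_sym.
Qed.

Lemma below_trans t v w : v \in below t -> w \in below v -> w \in below t.
Proof.
move=> vt wv; case/belowP: (vt) => _ _ _ vtr; case/belowP: (wv) => wS wv' wr wvr.
apply/belowP; split=> //.
  by apply: contraTneq wv => ->; apply: below_asym.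
apply/negP => wtr.
have wtvr : ~~ connect (induced_rel e (S :\ t :\ v)) w r.
  by apply: contra wvr; apply: connect_inducedS; apply/setSD/subsetDl.
case/negP: vtr; apply: connect_inducedS (connect_separator_swap _ wtr wtvr).
  by apply/subsetP => u; rewrite !inE => /and3P[_ -> ->]; rewrite andbT.
by rewrite eq_sym.
Qed.

Lemma below_proper t v : v \in below t -> below v \proper below t.
Proof.
move=> vt; apply/properP; split; last by exists v; rewrite ?below_notin.
by apply/subsetP => w; apply: below_trans.
Qed.

Lemma below_path u q1 c q2 d :
  path (induced_rel e S) u (q1 ++ c :: q2) -> uniq (u :: q1 ++ c :: q2) ->
  last u (q1 ++ c :: q2) = r -> d \in q2 -> u \in below d -> c \in below d.
Proof.
move=> up uq rE dq2 /belowP[uS ud _ udr].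
have qS := path_induced_all up.
have cS : c \in S by apply: (allP qS); rewrite mem_cat inE eqxx orbT.
move: uq; rewrite /= mem_cat inE negb_or cat_uniq /=.
case/and5P => [_ _ /norP[_ dq1] cq2 _].
move: up; rewrite cat_path /= => /and3P[uq1 ec cq2p].
have cd : c != d by apply: contraNneq cq2 => ->.
apply/belowP; split=> //.
  by apply/connectP; exists q2 => //; rewrite -rE last_cat.
apply: contra udr; apply: connect_trans; apply/connectP; exists (rcons q1 c).
  rewrite path_inducedE ?inE ?ud ?uS // rcons_path (sub_path (@induced_rel_sub _ _ _) uq1).
  rewrite (induced_rel_sub ec) /=; apply/allP => z; rewrite mem_rcons inE.
  case/orP => [/eqP->|zq1]; first by rewrite !inE cd cS.
  have zS : z \in S by apply: (allP qS z); rewrite mem_cat zq1.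
  by rewrite !inE zS andbT; apply: contraNneq dq1 => zd; apply/hasP; exists d; rewrite // -zd.
by rewrite last_rcons.
Qed.

Lemma below_total u a b : u \in below a -> u \in below b -> a != b ->
  a \in below b \/ b \in below a.
Proof.
move=> ua ub ab; case/belowP: (ua) => _ ua' /connectP[p0 up0 rE] uar.
case/belowP: (ub) => _ ub' _ ubr.
case: (shortenP up0) rE => p up p_uniq _ rE.
have ap : a \in p by apply: (separator_mem_path up); rewrite 1?eq_sym // -rE.
have bp : b \in p by apply: (separator_mem_path up); rewrite 1?eq_sym // -rE.
case/splitPr: ap up p_uniq rE bp => p1 p2 up p_uniq rE.
rewrite mem_cat inE eq_sym (negbTE ab) /= => /orP[bp1|bp2]; last first.
  by left; apply: (below_path up p_uniq (esym rE) bp2 ub).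
right; case/splitPr: bp1 up p_uniq rE => q1 q2 up p_uniq rE.
rewrite -catA /= in up p_uniq rE.
by apply: (below_path up p_uniq (esym rE) _ ua); rewrite mem_cat inE eqxx orbT.
Qed.

Lemma deg_in_le_below_above v : deg_in e S v <= #|below v| + #|above v|.
Proof.
apply: leq_trans (leq_card_setU _ _); apply/subset_leq_card/subsetP => y.
case/setIdP=> yS evy; rewrite in_setU /above inE yS evy /=; exact: orbN.
Qed.

Hypotheses (ei : irreflexive e) (cac : cactus e).

Lemma above_connect v y : v \in S -> connS v r -> y \in above v -> connSD v y r.
Proof.
move=> vS vr /setIdP[yS /andP[evy yv]].
have y_v : y != v by apply: contraTneq evy => ->; rewrite ei.
apply: contraNT yv => yvr; apply/belowP; split=> //.
by apply: connect_trans vr; apply: connect_induced1; rewrite // es.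
Qed.

Lemma cactus_card_above v : v \in S -> connS v r -> #|above v| <= 2.
Proof.
move=> vS vr; rewrite leqNgt; apply/negP => /card_gt2P[y1 [y2 [y3 [[y1v y2v y3v] yneq]]]].
have csym := connect_induced_sym (S :\ v) es.
have ev y : y \in above v -> e v y by case/setIdP=> _ /andP[].
apply: (cactus_linked_nbrs es ei cac (ev _ y1v) (ev _ y2v) (ev _ y3v) yneq).
  by apply: connect_trans (above_connect vS vr y1v) _; rewrite csym above_connect.
by apply: connect_trans (above_connect vS vr y2v) _; rewrite csym above_connect.
Qed.

End Separators.

(* [X] can be peeled off [S] at [z]: once [z] is deleted, [X :\ z] and its
   neighbours outside [X] have degree at most [k] in [S :\ z].  Deleting one
   vertex per [k.+1] vertices of [S] therefore suffices to make [S] sparse. *)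
Definition peelable (T : finType) (e : rel T) (S X : {set T}) (z : T) (k : nat) :=
  [/\ X \subset S, z \in X, k < #|X|,
      forall x, x \in X :\ z -> deg_in e (S :\ z) x <= k &
      forall y x, y \in S :\: X -> x \in X :\ z -> e x y -> deg_in e (S :\ z) y <= k].

Section Peeling.
Variables (T : finType) (e : rel T) (S : {set T}) (r : T) (k : nat).
Hypotheses (es : symmetric e) (ei : irreflexive e) (cac : cactus e) (k_ge2 : 2 <= k).

Local Notation deg := (deg_in e S).
Local Notation below := (below e S r).
Local Notation above := (above e S r).

Lemma peel_below x : x \in S -> {in below x, forall u, deg u <= k} ->
  k <= #|below x| -> peelable e S (x |: below x) x k.
Proof.
move=> xS low kx; split.
- by rewrite subUset sub1set xS below_sub.
- exact: setU11.
- by rewrite cardsU1 below_notin.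
- move=> u /setD1P[ux /setU1P[uxE|uD]]; first by rewrite uxE eqxx in ux.
  exact: leq_trans (deg_in_setD1_le _ _ _ _) (low u uD).
move=> y u /setDP[yS]; rewrite in_setU1 negb_or => /andP[yx yD].
case/setD1P=> ux /setU1P[uxE|uD] euy; first by rewrite uxE eqxx in ux.
by rewrite (below_nbr es uD yS euy yx) in yD.
Qed.

Lemma peel_pendant v a c : v \in S -> {in below v, forall u, deg u <= k} ->
  deg v = k.+1 -> #|below v| = k.-1 ->
  a != c -> above v = [set a; c] -> deg c <= k ->
  peelable e S (a |: (v |: below v)) a k.
Proof.
move=> vS low degv belowv ac abv c_low.
have /setIdP[aS /andP[eva av]] : a \in above v by rewrite abv !inE eqxx.
have a_v : a != v by apply: contraTneq eva => ->; rewrite ei.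
split.
- by rewrite !subUset !sub1set aS vS below_sub.
- exact: setU11.
- rewrite cardsU1 cardsU1 below_notin in_setU1 (negbTE a_v) (negbTE av) belowv.
  by clear -k_ge2; lia.
- move=> u /setD1P[ua /setU1P[uaE|/setU1P[->|uD]]]; first by rewrite uaE eqxx in ua.
    by have := deg_in_setD1 aS eva; rewrite degv; clear; lia.
  exact: leq_trans (deg_in_setD1_le _ _ _ _) (low u uD).
move=> y u /setDP[yS]; rewrite !in_setU1 !negb_or => /and3P[ya yv yD].
case/setD1P=> ua /setU1P[uaE|/setU1P[->|uD]] euy; first by rewrite uaE eqxx in ua.
  have : y \in above v by apply/setIdP; split=> //; rewrite euy.
  rewrite abv !inE (negbTE ya) => /eqP ->.
  exact: leq_trans (deg_in_setD1_le _ _ _ _) c_low.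
by rewrite (below_nbr es uD yS euy yv) in yD.
Qed.

(* The descendants of [v] and of [c] are disjoint, so [X] has [2k - 1]
   elements. *)
Lemma peel_pair v c : v \in S -> connect (induced_rel e S) v r ->
  {in below v, forall u, deg u <= k} -> {in below c, forall u, deg u <= k} ->
  deg v = k.+1 -> #|below v| = k.-1 ->
  c \in above v -> v \notin below c -> k < deg c -> #|below c| < k ->
  peelable e S (v |: (below v :|: below c)) v k.
Proof.
move=> vS vr low_v low_c degv belowv /setIdP[cS /andP[evc cv]] vc c_high c_few.
have cr : connect (induced_rel e S) c r.
  by apply: connect_trans vr; apply: connect_induced1; rewrite // es.
have deg_c := deg_in_le_below_above e S r c.
have above_c := cactus_card_above es ei cac cS cr.
have [degc belowc] : deg c = k.+1 /\ #|below c| = k.-1.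
  by clear -c_high c_few above_c deg_c; lia.
have v_c : v != c by apply: contraTneq evc => ->; rewrite ei.
have below_disj : [disjoint below v & below c].
  apply/pred0P => u /=; apply/negP => /andP[uv uc].
  by case: (below_total uv uc v_c) => [vbc|cbv]; [rewrite vbc in vc | rewrite cbv in cv].
split.
- by rewrite !subUset !sub1set vS !below_sub.
- exact: setU11.
- rewrite cardsU1 in_setU (negbTE (below_notin _ _ _ _)) (negbTE vc).
  by rewrite cardsU (disjoint_setI0 below_disj) cards0 /= belowv belowc; clear -k_ge2; lia.
- move=> u /setD1P[uv /setU1P[uvE|/setUP[uD|uD]]]; first by rewrite uvE eqxx in uv.
    exact: leq_trans (deg_in_setD1_le _ _ _ _) (low_v u uD).
  exact: leq_trans (deg_in_setD1_le _ _ _ _) (low_c u uD).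
move=> y u /setDP[yS]; rewrite in_setU1 in_setU !negb_or => /and3P[yv yDv yDc].
case/setD1P=> uv /setU1P[uvE|/setUP[uD|uD]] euy; first by rewrite uvE eqxx in uv.
  by rewrite (below_nbr es uD yS euy yv) in yDv.
have [ycE|yc] := eqVneq y c; last by rewrite (below_nbr es uD yS euy yc) in yDc.
by rewrite ycE; have := deg_in_setD1 vS (etrans (es _ _) evc); rewrite degc; clear; lia.
Qed.

Lemma peelable_minimal t v :
  (forall w, w \in below t -> {in below w, forall u, deg u <= k}) ->
  v \in below t -> k < deg v -> exists X z, peelable e S X z k.
Proof.
move=> low vt v_high; case/belowP: (vt) => vS _ vr _.
have [kv|vk] := leqP k #|below v|.
  by exists (v |: below v), v; apply: peel_below vS (low v vt) kv.
have deg_v := deg_in_le_below_above e S r v.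
have above_v := cactus_card_above es ei cac vS vr.
have [degv belowv abv2] : [/\ deg v = k.+1, #|below v| = k.-1 & #|above v| == 2].
  by clear -v_high vk above_v deg_v; split; [lia | lia | apply/eqP; lia].
case/cards2P: abv2 => p [q [pq abv]].
have [q_low|q_high] := leqP (deg q) k.
  exists (p |: (v |: below v)), p.
  exact: peel_pendant vS (low v vt) degv belowv pq abv q_low.
have [p_low|p_high] := leqP (deg p) k.
  exists (q |: (v |: below v)), q.
  by apply: peel_pendant vS (low v vt) degv belowv _ _ p_low; rewrite 1?eq_sym // abv setUC.
have peel_high c : c \in above v -> v \notin below c -> k < deg c ->
    exists X z, peelable e S X z k.
  move=> cv vc c_high; case/setIdP: (cv) => cS /andP[evc _].
  have ct : c \in below t by apply: (below_nbr es vt cS evc); apply: contraTneq vt => <-.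
  have [kc|ck] := leqP k #|below c|.
    by exists (c |: below c), c; apply: peel_below cS (low c ct) kc.
  exists (v |: (below v :|: below c)), v.
  exact: peel_pair vS vr (low v vt) (low c ct) degv belowv cv vc c_high ck.
have pv : p \in above v by rewrite abv !inE eqxx.
have qv : q \in above v by rewrite abv !inE eqxx orbT.
have [vp|vp] := boolP (v \in below p); last exact: (peel_high p pv vp p_high).
apply: (peel_high q qv _ q_high); apply/negP => vq.
case/setIdP: pv => pS /andP[evp _]; case/setIdP: qv => qS /andP[evq _].
have qp : q \in below p by apply: (below_nbr es vp qS evq); rewrite eq_sym.
by move: (below_asym qp); rewrite (below_nbr es vq pS evp pq).
Qed.

Lemma peelable_below t b : b \in below t -> k < deg b ->
  exists X z, peelable e S X z k.
Proof.
move=> bt b_high.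
pose high_below x := [exists u in below x, k < deg u].
have ht : high_below t by apply/existsP; exists b; rewrite bt.
case: (arg_minnP (fun x => #|below x|) ht) => t' /existsP[v /andP[vt' v_high]] t'_min.
apply: (peelable_minimal _ vt' v_high) => w wt' u uw; rewrite leqNgt; apply/negP => u_high.
have /t'_min : high_below w by apply/existsP; exists u; rewrite uw.
by rewrite leqNgt (proper_card (below_proper wt')).
Qed.

End Peeling.

Lemma exists_peelable (T : finType) (e : rel T) (S : {set T}) k b :
  symmetric e -> irreflexive e -> cactus e -> 2 <= k ->
  b \in S -> k < deg_in e S b -> exists X z, peelable e S X z k.
Proof.
move=> es ei cac k_ge2 bS b_high.
have [r /setIdP[rS ebr]] : exists r, r \in [set y in S | e b y].
  by apply/set0Pn; rewrite -card_gt0; apply: leq_ltn_trans b_high.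
have br : b != r by apply: contraTneq ebr => ->; rewrite ei.
have b_r : b \in below e S r r.
  apply/belowP; split=> //; [exact: connect_induced1 | exact: connect_induced_setD1].
exact: (peelable_below es ei cac k_ge2 b_r b_high).
Qed.

Lemma cactus_deg_deletion (T : finType) (e : rel T) k (S : {set T}) :
  symmetric e -> irreflexive e -> cactus e -> 2 <= k ->
  exists D : {set T}, [/\ D \subset S, k.+1 * #|D| <= #|S| - 1 &
    {in S :\: D, forall x, deg_in e (S :\: D) x <= k}].
Proof.
move=> es ei cac k_ge2; have [n] := ubnP #|S|; elim: n S => // n IHn S /ltnSE S_n.
have [/existsP[b /andP[bS b_high]] | all_low] := boolP [exists b in S, k < deg_in e S b];
  last first.
  exists set0; rewrite sub0set cards0 muln0 setD0; split=> // x xS.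
  by rewrite leqNgt; apply: contra all_low => x_high; apply/existsP; exists x; rewrite xS.
have [X [z [XS zX X_big X_low X_nbr]]] := exists_peelable es ei cac k_ge2 bS b_high.
have S_big : k.+1 < #|S| := leq_ltn_trans b_high (deg_in_ltn_card ei bS).
have card_SX : #|S :\: X| = #|S| - #|X| by rewrite cardsD (setIidPr XS).
have X_S := subset_leq_card XS.
have [|D [DSX D_small D_low]] := IHn (S :\: X).
  by rewrite card_SX; clear -S_n X_big S_big; lia.
exists (z |: D); split.
- by rewrite subUset sub1set (subsetP XS z zX) (subset_trans DSX (subsetDl S X)).
- have : #|z |: D| <= #|D|.+1 by rewrite cardsU1; case: (z \notin D).
  rewrite -(leq_pmul2l (ltn0Sn k)) mulnS => /leq_trans; apply.
  by move: D_small; rewrite card_SX; clear -S_big X_big X_S; lia.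
move=> x /setDP[xS]; rewrite in_setU1 negb_or => /andP[xz xD].
have SzD_Sz : S :\: (z |: D) \subset S :\ z.
  by apply/subsetP => y; rewrite !inE negb_or => /andP[/andP[-> _] ->].
have [xX|xX] := boolP (x \in X).
  by apply: leq_trans (deg_inS e x SzD_Sz) (X_low x _); rewrite !inE xz xX.
have [/existsP[u /andP[uX eux]] | no_nbr] := boolP [exists u in X :\ z, e u x].
  by apply: leq_trans (deg_inS e x SzD_Sz) (X_nbr x u _ uX eux); rewrite inE xX.
apply: leq_trans (D_low x _); last by rewrite !inE xD xX.
apply/subset_leq_card/subsetP => y /setIdP[/setDP[yS]].
rewrite in_setU1 negb_or => /andP[yz yD] exy; rewrite !inE yD yS exy !andbT /=.
by apply: contra no_nbr => yX; apply/existsP; exists y; rewrite !inE yz yX es.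
Qed.

Lemma ceil_div_budget k j d : 0 < k -> 1 < j ->
  k.+1 * d <= j - 1 + (j - 1 + (k - 1)) %/ k - 1 ->
  j <= j - 1 + (j - 1 + (k - 1)) %/ k - d.
Proof.
move=> k_gt0 j_gt1; set c := _ %/ k => budget.
have c_k : j - 1 <= c * k.
  by have := ltn_ceil (j - 1 + (k - 1)) k_gt0; rewrite -/c mulSn; lia.
have [c_d|] := leqP c d; last lia.
have := leq_mul2l k.+1 c d; rewrite c_d orbT mulSn mulnC => /leq_trans/(_ budget).
by lia.
Qed.

Lemma sparse_set_of_sub (T : finType) (e : rel T) k j (A : {set T}) :
  j <= #|A| -> {in A, forall x, deg_in e A x <= k} -> exists S, sparse_set e k j S.
Proof.
case/card_geqP=> s [s_uniq s_size sA] A_low; exists [set x in s]; split.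
  by rewrite cardsE (card_uniqP s_uniq).
have sub : [set x in s] \subset A by apply/subsetP => x; rewrite inE => /sA.
by move=> x xs; apply: leq_trans (deg_inS e x sub) (A_low x (subsetP sub x xs)).
Qed.

Lemma cactus_ramsey_upper i k j : 2 <= k -> 1 < j ->
  ramsey_prop cacti k i j (j - 1 + (j - 1 + (k - 1)) %/ k).
Proof.
move=> k_ge2 j_gt1 e [es ei] cac; right.
have [D [_ D_small D_low]] := cactus_deg_deletion setT es ei cac k_ge2.
apply: (sparse_set_of_sub _ D_low); rewrite cardsD setTI cardsT card_ord.
rewrite cardsT card_ord in D_small.
exact: ceil_div_budget (ltnW k_ge2) j_gt1 D_small.
Qed.

Section StarForest.
Variables (m d n : nat).

(* The vertices [a < d * m] form [d] stars on the intervals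
   [[s * m, s * m + m)], centred at [s * m]; the others are isolated. *)
Definition star_forest : rel 'I_n := fun a b =>
  [&& a != b, a < d * m, b < d * m, a %/ m == b %/ m & (a %% m == 0) || (b %% m == 0)].

Local Notation G := star_forest.

Lemma star_forest_simple : simple_graph G.
Proof.
split; last by move=> a; rewrite /G eqxx.
move=> a b; rewrite /G eq_sym (eq_sym (a %/ m)) orbC.
by case: (a < d * m); case: (b < d * m); rewrite ?andbF.
Qed.

Lemma star_center_eq (a b : 'I_n) : a %/ m = b %/ m -> a %% m = 0 -> b %% m = 0 -> a = b.
Proof. by move=> q ra rb; apply/val_inj; rewrite /= (divn_eq a m) (divn_eq b m) q ra rb. Qed.

Lemma star_leaf_nbr_uniq (x y1 y2 : 'I_n) : x %% m != 0 -> G x y1 -> G x y2 -> y1 = y2.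
Proof.
move=> xl /and5P[_ _ _ /eqP q1 c1] /and5P[_ _ _ /eqP q2 c2].
rewrite (negbTE xl) /= in c1 c2.
by apply: star_center_eq; [rewrite -q1 -q2 | apply/eqP | apply/eqP].
Qed.

Lemma star_center_nbr (x y : 'I_n) : x %% m == 0 -> G x y -> y %% m != 0.
Proof.
move=> xc /and5P[xy _ _ /eqP q _]; apply: contra xy => yc.
by rewrite (star_center_eq q (eqP xc) (eqP yc)).
Qed.

Lemma star_leaf_deg (S : {set 'I_n}) (x : 'I_n) : x %% m != 0 -> deg_in G S x <= 1.
Proof.
move=> xl; apply/card_le1_eqP => y1 y2 /setIdP[_ xy1] /setIdP[_ xy2].
by rewrite /all_equal_to (star_leaf_nbr_uniq xl xy1 xy2).
Qed.

Lemma star_forest_low_deg (S : {set 'I_n}) : S != set0 ->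
  exists2 x, x \in S & deg_in G S x <= 1.
Proof.
case/set0Pn=> x xS; have [xc|xl] := boolP (x %% m == 0); last first.
  by exists x; rewrite ?star_leaf_deg.
have [/set0Pn[y /setIdP[yS xy]] | no_nbr] := boolP ([set y in S | G x y] != set0).
  by exists y; rewrite ?star_leaf_deg ?(star_center_nbr xc xy).
by exists x; rewrite // /deg_in (eqP (negbNE no_nbr)) cards0.
Qed.

Lemma star_forest_cactus : cactus G.
Proof.
move=> B [nB _]; have [Gs Gi] := star_forest_simple.
have [B_big|B_small] := ltnP 2 #|B|.
  have [x xB] := star_forest_low_deg nB.1.
  by rewrite leqNgt (nonseparable_deg_ge2 Gi nB B_big xB).
have B_pos : 0 < #|B| by rewrite card_gt0 nB.1.
have [/eqP/cards1P[x ->]|B_ne1] := eqVneq #|B| 1; first by apply: Or33; exists x.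
have /cards2P[a [b [ab BE]]] : #|B| == 2 by clear -B_small B_pos B_ne1; lia.
apply: Or32; exists a, b; split=> //; split=> //.
have [aB bB] : a \in B /\ b \in B by rewrite BE !inE !eqxx orbT.
have [z [_ zB az _]] := connect_induced_step (nB.2.1 a b aB bB) ab.
have za : z != a by apply: contraTneq az => ->; rewrite Gi.
by move: zB; rewrite BE !inE (negbTE za) => /eqP <-.
Qed.

Lemma star_forest_no_dense k (S : {set 'I_n}) : ~ dense_set G k (k + 3) S.
Proof.
case=> S_card S_dense; have [|x xS] := star_forest_low_deg (S := S).
  by rewrite -card_gt0 S_card addn3.
have := card_le_deg_add_compl G S x; rewrite S_card.
by have := S_dense x xS; clear; lia.
Qed.

End StarForest.

Arguments star_forest : clear implicits.

Lemma star_forest_sparse_miss k d n (S : {set 'I_n}) (s : 'I_d) : d * k.+2 <= n ->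
  {in S, forall x, deg_in (star_forest k.+2 d n) S x <= k} ->
  exists2 a : 'I_n, a \notin S & a %/ k.+2 = s.
Proof.
move=> dn S_low.
have lt_dm (i : 'I_k.+2) : s * k.+2 + i < d * k.+2.
  have : s.+1 * k.+2 <= d * k.+2 by rewrite leq_mul2r ltn_ord orbT.
  by rewrite mulSn; move: (s * k.+2) (d * k.+2) (ltn_ord i) => a b; lia.
pose leaf i : 'I_n := Ordinal (leq_trans (lt_dm i) dn).
have leaf_div i : leaf i %/ k.+2 = s by rewrite /= divnMDl // divn_small ?addn0.
have leaf_mod i : leaf i %% k.+2 = i by rewrite /= modnMDl modn_small.
have [leavesS|/subsetPn[_ /imsetP[i _ ->] iS]] := boolP (leaf @: [set: 'I_k.+2] \subset S);
  last by exists (leaf i); rewrite ?leaf_div.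
have leaf_inj : injective leaf by move=> i i' /(congr1 val)/addnI/val_inj.
have leafS i : leaf i \in S by rewrite (subsetP leavesS) ?imset_f.
have : leaf @: [set~ ord0] \subset [set y in S | star_forest k.+2 d n (leaf ord0) y].
  apply/subsetP => _ /imsetP[i i0 ->]; rewrite !inE in i0.
  by rewrite inE leafS /star_forest (inj_eq leaf_inj) eq_sym i0 !lt_dm !leaf_div eqxx leaf_mod.
move/subset_leq_card; rewrite card_imset // cardsC1 card_ord /=.
by have := S_low _ (leafS ord0); rewrite /deg_in => deg_le /leq_trans/(_ deg_le); rewrite ltnn.
Qed.

Lemma star_forest_sparse k d n j (S : {set 'I_n}) : d * k.+2 <= n ->
  sparse_set (star_forest k.+2 d n) k j S -> j + d <= n.
Proof.
move=> dn [S_card S_low].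
have /fin_all_exists2[f f_notS f_div] s := star_forest_sparse_miss s dn S_low.
have {f_notS f_div} [g g_notS g_div] : exists2 g : 'I_d -> 'I_n,
  forall s, g s \notin S & forall s, g s %/ k.+2 = s by exists f.
have g_inj : injective g by move=> s s' gg'; apply: ord_inj; rewrite -g_div gg' g_div.
have : g @: [set: 'I_d] \subset ~: S by apply/subsetP => _ /imsetP[s _ ->]; rewrite inE g_notS.
move/subset_leq_card; rewrite card_imset // cardsT card_ord.
by have := cardsC S; rewrite S_card card_ord; move: #|~: S| => c; lia.
Qed.

Lemma cactus_ramsey_lower k j n : 0 < j -> n <= j - 1 + (j - 1) %/ (k + 1) ->
  ~ ramsey_prop cacti k (k + 3) j n.
Proof.
move=> j_gt0 n_small ramsey; pose d := n - (j - 1).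
have dn : d * k.+2 <= n.
  have := leq_divM (j - 1) (k + 1); rewrite -(addn1 k) mulnDr muln1.
  by move: ((j - 1) %/ (k + 1)) => q; rewrite /d; nia.
case: (ramsey _ (@star_forest_simple k.+2 d n) (@star_forest_cactus k.+2 d n)).
  by case=> S /star_forest_no_dense.
case=> S /(star_forest_sparse dn).
by rewrite /d; lia.
Qed.

Lemma ramsey_num_spec cls k i j n : ramsey_prop cls k i j n ->
  ramsey_prop cls k i j (ramsey_num cls k i j) /\
  forall m, ramsey_prop cls k i j m -> ramsey_num cls k i j <= m.
Proof.
pose P m : bool := excluded_middle_informative (ramsey_prop cls k i j m).
have PP m : P m <-> ramsey_prop cls k i j m by rewrite /P; case: excluded_middle_informative.
move=> /PP Pn; case: (ex_minnP (ex_intro P n Pn)) => m /PP Pm m_min.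
have least : exists r, ramsey_prop cls k i j r /\ forall m, ramsey_prop cls k i j m -> r <= m.
  by exists m; split=> // m' /PP /m_min.
exact: (epsilon_spec _ _ least).
Qed.

Theorem corollary4p2 (k j : nat) :
  4 <= k -> k + 2 <= j ->
  j + (j - 1) %/ (k + 1) <= ramsey_num cacti k (k + 3) j /\
  ramsey_num cacti k (k + 3) j <= j - 1 + (j - 1 + (k - 1)) %/ k.
Proof.
move=> k_ge4 j_big.
have k_ge2 : 2 <= k by lia.
have j_gt1 : 1 < j by lia.
have upper := cactus_ramsey_upper (k + 3) k_ge2 j_gt1.
have [R_prop R_min] := ramsey_num_spec upper.
split; last exact: R_min.
rewrite leqNgt; apply/negP => R_small.
by apply: (cactus_ramsey_lower _ _ R_prop); lia.
Qed.
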